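(* Let $G$ be a finite group and $p$ a prime. The power graph $P(G)$ contains no induced subgraph isomorphic to the path $P_4$ on four vertices, nor to the $4$-cycle $C_4$, whose four vertices are all elements of $G$ whose orders are powers of $p$.
   Context: The power graph $P(G)$ of a group $G$ has vertex set $G$, with distinct $u,v$ adjacent if and only if $u=v^i$ or $v=u^j$ for some integers $i,j$. *)

From mathcomp Require Import all_boot ssralg ssrint all_fingroup pgroup.
Set Implicit Arguments. Unset Strict Implicit. Unset Printing Implicit Defensive.

Local Open Scope group_scope.

Definition gexpz (gT : finGroupType) (v : gT) (z : int) : gT :=
  match z with
  | Posz n => v ^+ n
  | Negz n => (v ^+ n.+1)^-1
  end.

Definition power_adj (gT : finGroupType) (u v : gT) : Prop :=
  u <> v /\ ((exists i : int, u = gexpz v i) \/ (exists j : int, v = gexpz u j)).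

Definition distinct4 (gT : finGroupType) (a b c d : gT) : Prop :=
  a <> b /\ a <> c /\ a <> d /\ b <> c /\ b <> d /\ c <> d.

Definition induced_P4 (gT : finGroupType) (a b c d : gT) : Prop :=
  distinct4 a b c d /\
  (power_adj a b /\ power_adj b c /\ power_adj c d /\
   ~ power_adj a c /\ ~ power_adj a d /\ ~ power_adj b d).

Definition induced_C4 (gT : finGroupType) (a b c d : gT) : Prop :=
  distinct4 a b c d /\
  (power_adj a b /\ power_adj b c /\ power_adj c d /\ power_adj d a /\
   ~ power_adj a c /\ ~ power_adj b d).

From mathcomp Require Import all_boot ssralg ssrint all_fingroup pgroup.
From mathcomp Require Import cyclic.
Set Implicit Arguments. Unset Strict Implicit. Unset Printing Implicit Defensive.
Local Open Scope group_scope.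

(* Two distinct elements are adjacent in the power graph iff one
   lies in the cyclic subgroup generated by the other, so adjacency is
   comparability for the preorder  x <= y  :<=>  x \in <[y]>.  Among
   p-elements this preorder has a key feature: the cyclic subgroups of p-power
   order inside a cyclic group form a chain, so two p-elements with a common
   upper bound are comparable.  Consequently, if a - b - c is an induced path
   on p-elements a, c, the middle vertex cannot be above either end; it lies
   below both:  b \in <[a]> and b \in <[c]>.
   An induced P4 or C4  a - b - c - d  contains the induced paths a - b - c and
   b - c - d, whence  c \in <[b]> \subset <[a]>,  making a and c adjacent:
   a contradiction.
   The argument only uses that orders are powers of p, not that p is prime. *)

Section PowerGraphPElements.
Variable gT : finGroupType.
Implicit Types a b c d x y : gT.

Lemma gexpz_in_cycle (v : gT) (i : int) : gexpz v i \in <[v]>.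
Proof. by case: i => n /=; rewrite ?groupV groupX ?cycle_id. Qed.

Lemma power_adjE x y :
  power_adj x y <-> x <> y /\ (x \in <[y]> \/ y \in <[x]>).
Proof.
split=> [[neq [[i xE]|[j yE]]]|[neq [/cycleP[n xE]|/cycleP[n yE]]]].
- by split=> //; left; rewrite xE gexpz_in_cycle.
- by split=> //; right; rewrite yE gexpz_in_cycle.
- by split=> //; left; exists (Posz n).
- by split=> //; right; exists (Posz n).
Qed.

Lemma mem_cycle_trans x y c : x \in <[y]> -> y \in <[c]> -> x \in <[c]>.
Proof. by move=> xy; rewrite -cycle_subG => /subsetP; apply. Qed.

(* Two p-elements of a common cyclic group are comparable: its subgroups of
   p-power order are totally ordered by inclusion. *)
Lemma p_elt_cycle_chain (p : nat) x y c :
  p.-elt x -> p.-elt y -> x \in <[c]> -> y \in <[c]> ->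
  x \in <[y]> \/ y \in <[x]>.
Proof.
rewrite /p_elt -!cycle_subG => /p_natP[i ox] /p_natP[j oy] sxc syc.
have subE := cardSg_cyclic (cycle_cyclic c).
case: (leqP i j) => [le_ij|lt_ji].
  by left; rewrite -(subE _ _ sxc syc) -!orderE ox oy dvdn_exp2l.
right; rewrite -(subE _ _ syc sxc) -!orderE ox oy dvdn_exp2l //.
exact: ltnW.
Qed.

Lemma induced_path_middle_below (p : nat) a b c :
  p.-elt a -> p.-elt c -> a <> c ->
  power_adj a b -> power_adj b c -> ~ power_adj a c ->
  b \in <[a]> /\ b \in <[c]>.
Proof.
move=> pa pc neq_ac /power_adjE[_ ab] /power_adjE[_ bc] not_ac.
have incomparable : ~ (a \in <[c]> \/ c \in <[a]>).
  by move=> cmp; apply: not_ac; apply/power_adjE.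
case: ab bc => [a_b|b_a] [b_c|c_b].
- by case: incomparable; left; apply: mem_cycle_trans a_b b_c.
- by case: incomparable; apply: (p_elt_cycle_chain pa pc a_b c_b).
- by [].
- by case: incomparable; right; apply: mem_cycle_trans c_b b_a.
Qed.

Lemma no_two_overlapping_induced_paths (p : nat) a b c d :
  p.-elt a -> p.-elt b -> p.-elt c -> p.-elt d -> a <> c -> b <> d ->
  power_adj a b -> power_adj b c -> power_adj c d ->
  ~ power_adj a c -> ~ power_adj b d -> False.
Proof.
move=> pa pb pc pd neq_ac neq_bd ab bc cd not_ac not_bd.
have [b_a _] := induced_path_middle_below pa pc neq_ac ab bc not_ac.
have [c_b _] := induced_path_middle_below pb pd neq_bd bc cd not_bd.
apply: not_ac; apply/power_adjE; split=> //.
by right; apply: mem_cycle_trans c_b b_a.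
Qed.

End PowerGraphPElements.

Theorem mainTheorem4 (gT : finGroupType) (G : {group gT}) (p : nat) :
  prime p ->
  (~ exists a b c d : gT,
       [/\ a \in G, b \in G, c \in G & d \in G] /\
       [/\ (p.-elt a)%g, (p.-elt b)%g, (p.-elt c)%g & (p.-elt d)%g] /\
       induced_P4 a b c d) /\
  (~ exists a b c d : gT,
       [/\ a \in G, b \in G, c \in G & d \in G] /\
       [/\ (p.-elt a)%g, (p.-elt b)%g, (p.-elt c)%g & (p.-elt d)%g] /\
       induced_C4 a b c d).
Proof.
move=> _; split.
  move=> [a [b [c [d [_ [[pa pb pc pd]
           [[_ [ac [_ [_ [bd _]]]]] [ab [bc [cd [not_ac [_ not_bd]]]]]]]]]]]].
  exact: (no_two_overlapping_induced_paths pa pb pc pd ac bd ab bc cd).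
move=> [a [b [c [d [_ [[pa pb pc pd]
         [[_ [ac [_ [_ [bd _]]]]] [ab [bc [cd [_ [not_ac not_bd]]]]]]]]]]]].
exact: (no_two_overlapping_induced_paths pa pb pc pd ac bd ab bc cd).
Qed.
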